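(* Let $\Delta$ be a finite tree, $\mathbb{G}=\mathbb{G}(\Delta)$ and $H\le\mathbb{G}$ a finite index subgroup. Let $p$ be an edge of $\Psi(H)$ joining vertices $v_1$ and $v_2$. Then $$\frac{L(v_1)}{l_{v_1}(p)}=\frac{L(v_2)}{l_{v_2}(p)}=r$$ for some positive integer $r$.
   Context: $\mathbb{G}(\Delta)$ is the right-angled Artin group with generators the vertices of $\Delta$ and relations $[u,v]=1$ for each edge. Conjugation: $g^h=hgh^{-1}$. $\widetilde{\Delta}^e$ (reduced extension graph) has as vertices the elements conjugate to canonical generators corresponding to vertices of degree greater than 1, adjacent iff they commute; $\mathbb{G}$ acts by conjugation. $\Psi(H)=H\backslash\widetilde{\Delta}^e$ is the quotient graph with quotient map $\gamma_H$. Labels: for a vertex $w$ of $\widetilde{\Delta}^e$, $\overline{L}(w)$ is the least positive $k$ with $w^k\in H$; for an edge $f$ joining $w_1,w_2$, $\overline{l}_{w_1}(f)$ is the least positive $k$ such that $w_1^kw_2^l\in H$ for some integer $l$. These are invariant under conjugation by $H$, and $L(v)=\overline{L}(w)$ for any $w$ with $\gamma_H(w)=v$, $l_{v_1}(p)=\overline{l}_{w_1}(f)$ for any edge $f$ with $\gamma_H(f)=p$ and endpoint $w_1$ with $\gamma_H(w_1)=v_1$. *)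

From mathcomp Require Import all_boot all_order all_algebra.
From Stdlib Require Import Relations.
Set Implicit Arguments. Unset Strict Implicit. Unset Printing Implicit Defensive.

Definition simple_graph (V : finType) (e : rel V) :=
  ssrbool.symmetric e /\ ssrbool.irreflexive e.

Definition is_tree (V : finType) (e : rel V) : Prop :=
  [/\ simple_graph e, 0 < #|V|,
      (forall x y : V, connect e x y) &
      (forall c : seq V, 3 <= size c -> uniq c -> ~~ cycle e c)].

Definition degree (V : finType) (e : rel V) (v : V) : nat := #|[set u | e v u]|.

(* Elements are words over the letters v^(+1) = (v,false), v^(-1) = (v,true),
   taken up to the equivalence generated by free cancellation and by the
   defining relations [u,v] = 1 for each edge uv. *)
Section RAAG.
Variables (V : finType) (e : rel V).

Definition letter := (V * bool)%type.
Definition word := seq letter.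
Definition linv (a : letter) : letter := (a.1, ~~ a.2).

Inductive raag_step : word -> word -> Prop :=
| step_free (u w : word) (a : letter) :
    raag_step (u ++ a :: linv a :: w) (u ++ w)
| step_comm (u w : word) (a b : letter) :
    e a.1 b.1 -> raag_step (u ++ a :: b :: w) (u ++ b :: a :: w).

Definition raag_eq : word -> word -> Prop := clos_refl_sym_trans word raag_step.

Definition winv (x : word) : word := rev (map linv x).
Fixpoint wpow (x : word) (n : nat) : word :=
  if n is n'.+1 then x ++ wpow x n' else [::].
Definition wzpow (x : word) (z : int) : word :=
  match z with Posz n => wpow x n | Negz n => winv (wpow x n.+1) end.

Definition gen (v : V) : word := [:: (v, false)].

Definition conj (g h : word) : word := h ++ g ++ winv h.

Definition is_subgroup (H : word -> Prop) : Prop :=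
  [/\ (forall x y, raag_eq x y -> H x -> H y),
      H [::],
      (forall x y, H x -> H y -> H (x ++ y)) &
      (forall x, H x -> H (winv x))].

Definition finite_index (H : word -> Prop) : Prop :=
  exists T : seq word, forall g : word,
    exists t h, t \in T /\ H h /\ raag_eq g (t ++ h).

(* vertices of the reduced extension graph: conjugates of canonical generators
   of vertices of degree > 1 *)
Definition ext_vertex (w : word) : Prop :=
  exists (v : V) (h : word), 1 < degree e v /\ raag_eq w (conj (gen v) h).

(* adjacency in the reduced extension graph: distinct and commuting *)
Definition ext_adj (w1 w2 : word) : Prop :=
  ~ raag_eq w1 w2 /\ raag_eq (w1 ++ w2) (w2 ++ w1).

(* Lbar(w) = k : k is the least positive integer with w^k in H *)
Definition Lbar_is (H : word -> Prop) (w : word) (k : nat) : Prop :=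
  0 < k /\ H (wpow w k) /\ (forall j, 0 < j -> H (wpow w j) -> k <= j).

(* lbar_{w1}(f) = k for the edge f joining w1 and w2 : k is the least positive
   integer such that w1^k w2^l in H for some integer l *)
Definition lbar_is (H : word -> Prop) (w1 w2 : word) (k : nat) : Prop :=
  0 < k /\ (exists l : int, H (wpow w1 k ++ wzpow w2 l)) /\
  (forall j, 0 < j -> (exists l : int, H (wpow w1 j ++ wzpow w2 l)) -> k <= j).

End RAAG.

(** For commuting [w1], [w2] the map [(a, b) |-> w1^a w2^b] is a homomorphism from Z^2 to
    G(Delta), so [{(a, b) | w1^a w2^b \in H}] is a subgroup of Z^2.  [L1], [L2] are the least
    positive elements of its intersections with the two axes and [l1], [l2] those of its two
    projections.  Taking [(l1, s l2)] and [(c, l2)] in it and writing [L2 = t l2], the points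
    [(l1 - c s, 0)] and [(c t, 0)] belong to it, so [L1] divides [l1 - c s] and [c t]; as
    [L2 l1 = (l1 - c s) L2 + (c t) (s l2)], this gives [L1 l2 | L2 l1].  By symmetry
    [L1 l2 = L2 l1], and [r = L1 / l1] is an integer since [L1] lies in the projection [l1 Z]. *)

From mathcomp Require Import all_boot all_order all_algebra ring zify.
From Stdlib Require Import Relations.
Import GRing.Theory Num.Theory.
Set Implicit Arguments. Unset Strict Implicit. Unset Printing Implicit Defensive.
Local Open Scope ring_scope.

Definition zmod_subgroup (M : zmodType) (S : M -> Prop) : Prop :=
  S 0 /\ forall x y, S x -> S y -> S (x - y).

Definition least_pos (S : int -> Prop) (n : nat) : Prop :=
  (0 < n)%N /\ S n /\ (forall j : nat, (0 < j)%N -> S j -> (n <= j)%N).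

Lemma least_pos_ext (S S' : int -> Prop) n :
  least_pos S n -> (forall a, S a <-> S' a) -> least_pos S' n.
Proof.
move=> [n_gt0 [Sn n_min]] SS'; split=> //; split=> [|j j_gt0 /SS']; first exact/SS'.
exact: n_min.
Qed.

Section ZmodSubgroup.
Variables (M : zmodType) (S : M -> Prop).
Hypothesis S_subgroup : zmod_subgroup S.

Lemma zmod_subgroupN x : S x -> S (- x).
Proof. by case: S_subgroup => S0 SB Sx; rewrite -sub0r; apply: SB. Qed.

Lemma zmod_subgroupD x y : S x -> S y -> S (x + y).
Proof.
by case: S_subgroup => _ SB Sx Sy; rewrite -[y]opprK; apply/SB/zmod_subgroupN.
Qed.

Lemma zmod_subgroupMn x n : S x -> S (x *+ n).
Proof.
by move=> Sx; elim: n => [|n IHn]; [case: S_subgroup | rewrite mulrS; apply: zmod_subgroupD].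
Qed.

Lemma zmod_subgroupMz x k : S x -> S (x *~ k).
Proof.
by move=> Sx; case: k => n; [|rewrite NegzE mulrNz; apply: zmod_subgroupN];
  apply: zmod_subgroupMn.
Qed.

End ZmodSubgroup.

Lemma least_pos_dvdz (S : int -> Prop) n a :
  zmod_subgroup S -> least_pos S n -> S a -> (n%:Z %| a)%Z.
Proof.
move=> S_subgroup [n_gt0 [Sn n_min]] Sa; apply/dvdz_mod0P.
have Smod : S (a %% n)%Z.
  have -> : (a %% n)%Z = a - n%:Z *~ (a %/ n)%Z
    by apply/eqP; rewrite mulrzz mulrC eq_sym subr_eq addrC -divz_eq.
  by apply: S_subgroup.2 => //; apply: zmod_subgroupMz.
have n_gt0Z : 0 < n%:Z by rewrite ltz_nat.
move: Smod (modz_ge0 a (lt0r_neq0 n_gt0Z)) (ltz_pmod a n_gt0Z).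
case: (a %% n)%Z => [[|r]|r] //= Sr _ r_lt_n.
by have := n_min r.+1 isT Sr; rewrite leqNgt -ltz_nat r_lt_n.
Qed.

Lemma pairMzE (M1 M2 : zmodType) (x : M1 * M2) k : x *~ k = (x.1 *~ k, x.2 *~ k).
Proof. by case: k => n; rewrite ?NegzE ?mulrNz -!pmulrn pairMnE. Qed.

Section PairSubgroup.
Variables (M1 M2 : zmodType) (S : M1 * M2 -> Prop).
Hypothesis S_subgroup : zmod_subgroup S.

Lemma zmod_subgroup_swap : zmod_subgroup (fun x : M2 * M1 => S (x.2, x.1)).
Proof. by case: S_subgroup => S0 SB; split=> // x y; apply: SB. Qed.

Lemma zmod_subgroup_fst_slice : zmod_subgroup (fun a => S (a, 0)).
Proof.
case: S_subgroup => S0 SB; split=> // a a' Sa Sa'.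
by rewrite -(subrr (0 : M2)); exact: SB Sa Sa'.
Qed.

Lemma zmod_subgroup_fst_proj : zmod_subgroup (fun a => exists b, S (a, b)).
Proof.
case: S_subgroup => S0 SB; split=> [|a a' [b Sab] [b' Sab']]; first by exists 0.
by exists (b - b'); apply: SB Sab Sab'.
Qed.

Lemma zmod_subgroup_pairB a b a' b' : S (a, b) -> S (a', b') -> S (a - a', b - b').
Proof. exact: S_subgroup.2. Qed.

Lemma zmod_subgroup_pairMz a b k : S (a, b) -> S (a *~ k, b *~ k).
Proof.
by move=> Sab; have := zmod_subgroupMz S_subgroup k Sab; rewrite pairMzE.
Qed.

End PairSubgroup.

Lemma least_pos_cross_dvdn (S : int * int -> Prop) (L1 L2 l1 l2 : nat) :
  zmod_subgroup S ->
  least_pos (fun a => S (a, 0)) L1 -> least_pos (fun b => S (0, b)) L2 ->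
  least_pos (fun a => exists b, S (a, b)) l1 ->
  least_pos (fun b => exists a, S (a, b)) l2 ->
  (L1 * l2 %| L2 * l1)%N.
Proof.
move=> S_subgroup HL1 [_ [SL2 _]] [_ [[b1 Sl1] _]] Hl2.
have [c Sc] := Hl2.2.1.
have dvd_L1 a : S (a, 0) -> (L1%:Z %| a)%Z.
  exact: least_pos_dvdz (zmod_subgroup_fst_slice S_subgroup) HL1.
have dvd_l2 a b : S (a, b) -> (l2%:Z %| b)%Z.
  move=> Sab; have proj2_subgroup := zmod_subgroup_fst_proj (zmod_subgroup_swap S_subgroup).
  by apply: least_pos_dvdz proj2_subgroup Hl2 _; exists a.
have [s b1E] := dvdzP (dvd_l2 _ _ Sl1).
have [t L2E] := dvdzP (dvd_l2 _ _ SL2).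
have L1_dvd_l1 : (L1%:Z %| l1%:Z - c * s)%Z.
  apply: dvd_L1.
  have := zmod_subgroup_pairB S_subgroup Sl1 (zmod_subgroup_pairMz S_subgroup s Sc).
  by rewrite !mulrzz b1E (mulrC s) subrr.
have L1_dvd_c : (L1%:Z %| c * t)%Z.
  apply: dvd_L1.
  have := zmod_subgroup_pairB S_subgroup (zmod_subgroup_pairMz S_subgroup t Sc) SL2.
  by rewrite !mulrzz L2E subr0 (mulrC l2%:Z) subrr.
suff : (L1%:Z * l2%:Z %| L2%:Z * l1%:Z)%Z by [].
have -> : L2%:Z * l1%:Z = (l1%:Z - c * s) * L2%:Z + (c * t) * (s * l2%:Z).
  by rewrite L2E; ring.
by rewrite rpredD // dvdz_mul // ?L2E ?dvdz_mull.
Qed.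

Lemma least_pos_ratio (S : int * int -> Prop) (L1 L2 l1 l2 : nat) :
  zmod_subgroup S ->
  least_pos (fun a => S (a, 0)) L1 -> least_pos (fun b => S (0, b)) L2 ->
  least_pos (fun a => exists b, S (a, b)) l1 ->
  least_pos (fun b => exists a, S (a, b)) l2 ->
  exists r : nat, (0 < r /\ L1 = r * l1 /\ L2 = r * l2)%N.
Proof.
move=> S_subgroup HL1 HL2 Hl1 Hl2.
have cross : (L1 * l2 = L2 * l1)%N.
  apply/eqP; rewrite eqn_dvd (least_pos_cross_dvdn S_subgroup HL1 HL2 Hl1 Hl2).
  exact: least_pos_cross_dvdn (zmod_subgroup_swap S_subgroup) HL2 HL1 Hl2 Hl1.
have l1_dvd_L1 : (l1 %| L1)%N.
  have SL1 : exists b, S (L1%:Z, b) by exists 0; exact: HL1.2.1.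
  exact: least_pos_dvdz (zmod_subgroup_fst_proj S_subgroup) Hl1 SL1.
have [l1_gt0 L1_gt0] := (Hl1.1, HL1.1).
exists (L1 %/ l1)%N; rewrite divn_gt0 // dvdn_leq // divnK //; split=> //; split=> //.
by apply/eqP; rewrite -(eqn_pmul2r l1_gt0) -cross mulnAC divnK.
Qed.

Section Words.
Variables (V : finType) (e : rel V).
Local Notation req := (raag_eq e).
Implicit Types (x y z p q : word V).

Lemma req_refl x : req x x. Proof. exact: rst_refl. Qed.
Lemma req_sym x y : req x y -> req y x. Proof. exact: rst_sym. Qed.
Lemma req_trans x y z : req x y -> req y z -> req x z. Proof. exact: rst_trans. Qed.

Lemma raag_step_cat p q x y : raag_step e x y -> raag_step e (p ++ x ++ q) (p ++ y ++ q).
Proof.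
case=> [u w a | u w a b e_ab].
  by have := step_free e (p ++ u) (w ++ q) a; rewrite -!catA.
by have := step_comm (p ++ u) (w ++ q) e_ab; rewrite -!catA.
Qed.

Lemma req_cat p q x y : req x y -> req (p ++ x ++ q) (p ++ y ++ q).
Proof.
elim=> [x' y' /(raag_step_cat p q) | x' | x' y' _ | x' y' z' _ IHxy _ IHyz].
- exact: rst_step.
- exact: req_refl.
- exact: req_sym.
- exact: req_trans IHyz.
Qed.

Lemma req_catl q x y : req x y -> req (x ++ q) (y ++ q).
Proof. exact: req_cat [::] q x y. Qed.

Lemma req_catr p x y : req x y -> req (p ++ x) (p ++ y).
Proof. by move=> /(req_cat p [::]); rewrite !cats0. Qed.

Lemma req_cat2 x x' y y' : req x x' -> req y y' -> req (x ++ y) (x' ++ y').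
Proof. by move=> /(req_catl y) xx' /(req_catr x'); apply: req_trans. Qed.

Lemma winv_cat x y : winv (x ++ y) = winv y ++ winv x.
Proof. by rewrite /winv map_cat rev_cat. Qed.

Lemma req_catV x : req (x ++ winv x) [::].
Proof.
elim: x => [|a x IHx]; first exact: req_refl.
have IHa := req_cat [:: a] (winv [:: a]) IHx; rewrite -!catA in IHa.
rewrite -cat1s winv_cat -!catA; apply: req_trans IHa _.
exact: rst_step (step_free e [::] [::] a).
Qed.

Lemma winvK x : winv (winv x) = x.
Proof.
rewrite /winv map_rev revK -map_comp -[RHS]map_id.
by apply: eq_map => -[v b]; rewrite /linv /= negbK.
Qed.

Lemma req_Vcat x : req (winv x ++ x) [::].
Proof. by have := req_catV (winv x); rewrite winvK. Qed.

Lemma req_divr x y z : req y (z ++ x) -> req z (y ++ winv x).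
Proof.
move=> /(req_catl (winv x)) yx; apply: req_sym (req_trans yx _).
by have := req_catr z (req_catV x); rewrite catA cats0.
Qed.

Lemma wpowSr x n : wpow x n.+1 = wpow x n ++ x.
Proof.
elim: n => [|n IHn]; first by rewrite /= cats0.
by rewrite -[wpow x n.+2]/(x ++ wpow x n.+1) {1}IHn catA.
Qed.

Lemma wzpowS x a : req (wzpow x (a + 1)) (wzpow x a ++ x).
Proof.
case: a => [n | [|n]].
- by rewrite -PoszD addn1 -wpowSr; apply: req_refl.
- by rewrite /= cats0; apply/req_sym/req_Vcat.
- have -> : Negz n.+1 + 1 = Negz n by rewrite !NegzE; lia.
  rewrite /= -/(wpow x n.+1) winv_cat -catA.
  by have := req_catr (winv (wpow x n.+1)) (req_Vcat x); rewrite cats0 => /req_sym.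
Qed.

Lemma wzpowB1 x a : req (wzpow x (a - 1)) (wzpow x a ++ winv x).
Proof. by apply: req_divr; rewrite -{1}(subrK 1 a); apply: wzpowS. Qed.

Definition raag_additive (M : zmodType) (f : M -> word V) : Prop :=
  forall a b, req (f (a + b)) (f a ++ f b).

Lemma wzpowD x : raag_additive (wzpow x).
Proof.
move=> a; elim/int_rect => [|n IHn|n IHn].
- by rewrite addr0 cats0; apply: req_refl.
- have -> : a + n.+1%:Z = (a + n%:Z) + 1 by lia.
  apply: req_trans (wzpowS _ _) _.
  by rewrite -[wzpow x n.+1]/(wpow x n.+1) wpowSr catA; apply: req_catl.
- have -> : a - n.+1%:Z = (a - n%:Z) - 1 by lia.
  have -> : - n.+1%:Z = - n%:Z - 1 by lia.
  apply: req_trans (wzpowB1 _ _) _; apply: req_trans (req_catl _ IHn) _.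
  by rewrite -catA; apply/req_catr/req_sym/wzpowB1.
Qed.

Lemma raag_additiveB (M : zmodType) (f : M -> word V) a b :
  raag_additive f -> req (f (a - b)) (f a ++ winv (f b)).
Proof. by move=> f_add; apply: req_divr; rewrite -{1}(subrK b a); apply: f_add. Qed.

Definition wcomm x y : Prop := req (x ++ y) (y ++ x).

Lemma wcomm_sym x y : wcomm x y -> wcomm y x.
Proof. exact: req_sym. Qed.

Lemma wcomm_winv x y : wcomm x y -> wcomm x (winv y).
Proof.
move=> xy; apply: req_sym; apply: req_divr.
rewrite -catA; apply: req_trans _ (req_catr (winv y) (req_sym xy)).
by have := req_catl x (req_Vcat y); rewrite -catA => /req_sym.
Qed.

Lemma wcomm_wpow x y n : wcomm x y -> wcomm x (wpow y n).
Proof.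
move=> xy; elim: n => [|n IHn]; first by rewrite /wcomm cats0; apply: req_refl.
rewrite /wcomm -[wpow y n.+1]/(y ++ wpow y n) !catA.
apply: req_trans (req_catl _ xy) _; rewrite -!catA; exact: req_catr.
Qed.

Lemma wcomm_wzpow x y a b : wcomm x y -> wcomm (wzpow x a) (wzpow y b).
Proof.
have wcomm_wzpowr x' y' b' : wcomm x' y' -> wcomm x' (wzpow y' b').
  by case: b' => n xy; [|apply: wcomm_winv]; apply: wcomm_wpow.
by move=> /wcomm_sym /(wcomm_wzpowr _ _ a) /wcomm_sym; apply: wcomm_wzpowr.
Qed.

Definition wzpow2 x y (ab : int * int) : word V := wzpow x ab.1 ++ wzpow y ab.2.

Lemma wzpow2D x y : wcomm x y -> raag_additive (wzpow2 x y).
Proof.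
move=> xy [a b] [a' b']; rewrite /wzpow2 /=.
apply: req_trans (req_cat2 (wzpowD x a a') (wzpowD y b b')) _.
rewrite -!catA; apply: req_catr; rewrite !catA; apply: req_catl.
exact: wcomm_wzpow xy.
Qed.

Lemma wzpow2_swap x y a b : wcomm x y -> req (wzpow2 x y (a, b)) (wzpow2 y x (b, a)).
Proof. exact: wcomm_wzpow. Qed.

Lemma Lbar_isE (H : word V -> Prop) x n :
  Lbar_is H x n = least_pos (fun a => H (wzpow x a)) n.
Proof. by []. Qed.

Lemma lbar_isE (H : word V -> Prop) x y n :
  lbar_is H x y n = least_pos (fun a => exists b, H (wzpow2 x y (a, b))) n.
Proof. by []. Qed.

End Words.

Lemma is_subgroup_preim (V : finType) (e : rel V) (H : word V -> Prop)
    (M : zmodType) (f : M -> word V) :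
  is_subgroup e H -> raag_additive e f -> zmod_subgroup (fun a => H (f a)).
Proof.
move=> [H_req H1 H_cat H_inv] f_add; split=> [|a b Ha Hb].
  apply: H_req H1; rewrite -(subrr 0); apply: req_sym.
  exact: req_trans (raag_additiveB _ _ f_add) (req_catV _ _).
exact: H_req (req_sym (raag_additiveB _ _ f_add)) (H_cat _ _ Ha (H_inv _ Hb)).
Qed.

Local Close Scope ring_scope.

Theorem mainTheorem16 (V : finType) (e : rel V) (Htree : is_tree e)
  (H : word V -> Prop) (Hsub : is_subgroup e H) (Hfin : finite_index e H)
  (w1 w2 : word V)
  (Hw1 : ext_vertex e w1) (Hw2 : ext_vertex e w2) (Hadj : ext_adj e w1 w2)
  (L1 L2 l1 l2 : nat)
  (HL1 : Lbar_is H w1 L1) (HL2 : Lbar_is H w2 L2)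
  (Hl1 : lbar_is H w1 w2 l1) (Hl2 : lbar_is H w2 w1 l2) :
  exists r : nat, 0 < r /\ L1 = r * l1 /\ L2 = r * l2.
Proof.
(* Only the commutation of [w1] and [w2] is used: in the paper the tree, finite-index and
   vertex hypotheses guarantee that the labels exist, which the statement assumes outright. *)
have w1w2 : wcomm e w1 w2 := Hadj.2.
have [H_req _ _ _] := Hsub.
move: HL1 HL2 Hl1 Hl2; rewrite !Lbar_isE !lbar_isE => HL1 HL2 Hl1 Hl2.
apply: (least_pos_ratio (is_subgroup_preim Hsub (wzpow2D w1w2))).
- by apply: (least_pos_ext HL1) => a; rewrite /wzpow2 /= cats0.
- by apply: (least_pos_ext HL2).
- exact: Hl1.
- apply: (least_pos_ext Hl2) => b.
  split=> -[a Ha]; exists a; apply: (H_req _ _ _ Ha).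
    exact: wzpow2_swap (wcomm_sym w1w2).
  exact: wzpow2_swap w1w2.
Qed.
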